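(* Consider $N$ material points $(P_i,m_i)$ with Cartesian coordinates $\mathbf X(\mathbf q,t)\in\mathbb R^{3N}$ (smooth, $\mathbf q\in\mathbb R^\ell$), momenta $\mathbf Q=(m_1\dot P_1,\dots,m_N\dot P_N)$, subject to a total force $\mathcal F=\mathcal F_0+\mathcal F_S+\mathcal F_A+\mathcal F_R+\mathcal G$, where: (i) $J_{\mathbf q}^T\mathbf X\,\mathcal F_0=\nabla_{\mathbf q}U_0$ for a smooth $U_0(\mathbf q,t)$; (ii) $J_{\mathbf q}^T\mathbf X\,\mathcal F_S=\mathcal O_s[\mathcal U_S]$ for some $s\ge0$ and smooth $\mathcal U_S(\mathbf q,\dots,\mathbf q^{(s+1)},t)$; (iii) $\mathcal F_A=\mathbb L\mathbf X^{(h+1)}$ for some integer $h\ge1$ and constant diagonal positive matrix $\mathbb L$, with $\mathcal U_A=\frac12\mathbb L\mathbf X^{(h)}\cdot\mathbf X^{(h)}$; (iv) $J_{\mathbf q}^T\mathbf X\,\mathcal F_R=-\nabla_{\mathbf q^{(\sigma)}}\mathcal R$ for some integer $\sigma\ge1$ and smooth $\mathcal R(\mathbf q,\dots,\mathbf q^{(\sigma)},t)$; (v) $\mathcal G=\mathcal G(\mathbf q,\dots,\mathbf q^{(\varrho-1)},t)$ for some integer $\varrho\ge1$, and $\gamma_\varrho=(J_{\mathbf q}^T\mathbf X\,\mathcal G)\cdot\mathbf q^{(\varrho)}$. Let $r=\max(s,h-1,\sigma,\varrho)$, $\mathcal L=\frac12\mathbf Q\cdot\dot{\mathbf X}+U_0$,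 and $$\mathcal Y_r=\frac{d^r\mathcal L}{dt^r}+\frac{d^{r-s}\mathcal U_S}{dt^{r-s}}-\frac1h\frac{d^{r-(h-1)}\mathcal U_A}{dt^{r-(h-1)}}-\frac{d^{r-\sigma}\mathcal R}{dt^{r-\sigma}}+\frac{d^{r-\varrho}\gamma_\varrho}{dt^{r-\varrho}}.$$ Then $\mathcal O_r[\mathcal Y_r]=J_{\mathbf q}^T\mathbf X(\mathcal F-\dot{\mathbf Q})$; in particular the Newton equations projected on the Lagrangian components, $J_{\mathbf q}^T\mathbf X\,\dot{\mathbf Q}=J_{\mathbf q}^T\mathbf X\,\mathcal F$, are equivalent to $$\nabla_{\mathbf q^{(r)}}\mathcal Y_r-(r+1)\frac{d}{dt}\nabla_{\mathbf q^{(r+1)}}\mathcal Y_r=0.$$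
   Context: $\mathbf q^{(h)}$ denotes the $h$-th time derivative (with $\mathbf q^{(0)}=\mathbf q$), treated as independent variables; $\mathbf X^{(h)}$ is the $h$-th total time derivative of $\mathbf X(\mathbf q(t),t)$ expressed as a function of $\mathbf q,\dots,\mathbf q^{(h)},t$. For $F(\mathbf q,\dots,\mathbf q^{(k)},t)$, $\frac{dF}{dt}=\partial_tF+\sum_{j=0}^k\nabla_{\mathbf q^{(j)}}F\cdot\mathbf q^{(j+1)}$ is the total time derivative. For $\mathbf w\in\mathbb R^{3N}$, $J_{\mathbf q}^T\mathbf X\,\mathbf w$ is the $\ell$-vector with components $\mathbf w\cdot\partial\mathbf X/\partial q_k$ (Lagrangian components). For $r\ge0$ and $\mathcal Y_r$ depending on $\mathbf q,\dots,\mathbf q^{(r+1)},t$, $\mathcal O_r[\mathcal Y_r]=\nabla_{\mathbf q^{(r)}}\mathcal Y_r-(r+1)\frac{d}{dt}\nabla_{\mathbf q^{(r+1)}}\mathcal Y_r$. *)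

From Stdlib Require Import Reals Lra Lia List ClassicalEpsilon.
Open Scope R_scope.

(** A point of the (infinite) jet space: [z j i] is the i-th component of
    q^(j) (so z 0 = q, z 1 = qdot, ...).  Only components i < l matter. *)
Definition Jet := nat -> nat -> R.
Definition JF := Jet -> R -> R.

Definition upd (z : Jet) (j i : nat) (x : R) : Jet :=
  fun j' i' => if andb (Nat.eqb j' j) (Nat.eqb i' i) then x else z j' i'.

Fixpoint fsum (n : nat) (f : nat -> R) : R :=
  match n with O => 0 | S n' => fsum n' f + f n' end.

Inductive Dir := DirT | DirQ (j i : nat).

Definition has_pd (d : Dir) (F : JF) (z : Jet) (t v : R) : Prop :=
  match d with
  | DirT => derivable_pt_lim (fun s => F z s) t v
  | DirQ j i => derivable_pt_lim (fun x => F (upd z j i x) t) (z j i) v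
  end.

Definition pd (d : Dir) (F : JF) : JF :=
  fun z t => epsilon (inhabits 0) (fun v => has_pd d F z t v).

Definition pdq (j i : nat) (F : JF) : JF := pd (DirQ j i) F.
Definition pdt (F : JF) : JF := pd DirT F.

Definition pds (ds : list Dir) (F : JF) : JF := fold_right pd F ds.

Definition depends_upto (l K : nat) (F : JF) : Prop :=
  forall (z z' : Jet) (t : R),
    (forall j i, (j <= K)%nat -> (i < l)%nat -> z j i = z' j i) -> F z t = F z' t.

Definition jcont (l K : nat) (F : JF) : Prop :=
  forall (z : Jet) (t eps : R), 0 < eps -> exists del, 0 < del /\
    forall (z' : Jet) (t' : R),
      (forall j i, (j <= K)%nat -> (i < l)%nat -> Rabs (z' j i - z j i) < del) ->
      Rabs (t' - t) < del -> Rabs (F z' t' - F z t) < eps.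

(** F is a smooth (C^infinity) function of (q, ..., q^(K), t) in R^(l(K+1)+1):
    all iterated partial derivatives exist everywhere and are continuous. *)
Definition smooth (l K : nat) (F : JF) : Prop :=
  depends_upto l K F /\
  forall ds : list Dir,
    (forall (d : Dir) (z : Jet) (t : R), exists v, has_pd d (pds ds F) z t v) /\
    jcont l K (pds ds F).

Definition jorder (l : nat) (F : JF) : nat :=
  epsilon (inhabits 0%nat)
    (fun K => depends_upto l K F /\ forall K', depends_upto l K' F -> (K <= K')%nat).

Definition tder (l : nat) (F : JF) : JF :=
  fun z t => pdt F z t +
    fsum (S (jorder l F)) (fun j => fsum l (fun i => pdq j i F z t * z (S j) i)).

Definition tdern (l n : nat) (F : JF) : JF := Nat.iter n (tder l) F.

Definition JT (l n : nat) (X : nat -> JF) (w : nat -> JF) (k : nat) : JF :=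
  fun z t => fsum n (fun a => pdq 0 k (X a) z t * w a z t).

Definition Op (l r : nat) (Y : JF) (k : nat) : JF :=
  fun z t => pdq r k Y z t - INR (S r) * tder l (pdq (S r) k Y) z t.

(* The operator O_r is linear, and O_(p+1)[dY/dt] = O_p[Y]: differentiating
   dY/dt in q^(j) gives d/dt (dY/dq^(j)) + dY/dq^(j-1), which needs the symmetry of second
   partial derivatives (Schwarz). Hence O_r[Y_r] = O_0[L] + O_s[U_S] - (1/h) O_(h-1)[U_A]
   - O_sigma[R] + O_rho[gamma_rho], and each term is computed directly: since
   dX^(h)/dq^(h) = dX/dq and dX^(h)/dq^(h-1) = h d/dt (dX/dq), Lagrange's computation gives
   O_(h-1)[1/2 c X^(h).X^(h)] = -h J^T (c X^(h+1)), which for h = 1 is the kinetic part of L;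
   R does not depend on q^(sigma+1), and gamma_rho is linear in q^(rho) with coefficients
   J^T G depending only on lower derivatives. *)

From Stdlib Require Import Reals Lra Lia List ClassicalEpsilon FunctionalExtensionality Classical.
From Coquelicot Require Import Coquelicot.
Open Scope R_scope.

Definition fplus (F G : JF) : JF := fun z t => F z t + G z t.
Definition fmul (F G : JF) : JF := fun z t => F z t * G z t.
Definition fscal (c : R) (F : JF) : JF := fun z t => c * F z t.
Definition fcst (c : R) : JF := fun _ _ => c.
Definition coord (j i : nat) : JF := fun z _ => z j i.
Definition fsumF (n : nat) (f : nat -> JF) : JF := fun z t => fsum n (fun a => f a z t).

Lemma fsumF_S n f : fsumF (S n) f = fplus (fsumF n f) (f n).
Proof. reflexivity. Qed.

Lemma fplus_0l G : fplus (fcst 0) G = G.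
Proof. extensionality z; extensionality t. unfold fplus, fcst. ring. Qed.

Lemma fplus_0r G : fplus G (fcst 0) = G.
Proof. extensionality z; extensionality t. unfold fplus, fcst. ring. Qed.

Lemma fsum_ext n f g : (forall a, (a < n)%nat -> f a = g a) -> fsum n f = fsum n g.
Proof. induction n; intro H; simpl; auto. rewrite IHn, H; auto. Qed.

Lemma fsum_plus n f g : fsum n (fun a => f a + g a) = fsum n f + fsum n g.
Proof. induction n; simpl; [ring|]. rewrite IHn; ring. Qed.

Lemma fsum_scal n c f : fsum n (fun a => c * f a) = c * fsum n f.
Proof. induction n; simpl; [ring|]. rewrite IHn; ring. Qed.

Lemma fsum_minus n f g : fsum n (fun a => f a - g a) = fsum n f - fsum n g.
Proof. induction n; simpl; [ring|]. rewrite IHn; ring. Qed.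

Lemma fsum_zero n f : (forall a, (a < n)%nat -> f a = 0) -> fsum n f = 0.
Proof. induction n; intro H; simpl; [reflexivity|]. rewrite IHn, H; auto; ring. Qed.

Lemma fsum_tail n M g : (n <= M)%nat -> (forall a, (n <= a < M)%nat -> g a = 0) ->
  fsum M g = fsum n g.
Proof.
  induction M; intros HnM Hg.
  - replace n with 0%nat by lia. reflexivity.
  - destruct (Nat.eq_dec n (S M)) as [->|]; [reflexivity|].
    simpl. rewrite (Hg M), IHM; try lia; [ring|]. intros; apply Hg; lia.
Qed.

Lemma fsum_delta n a f :
  fsum n (fun b => if Nat.eqb b a then f b else 0) = if Nat.ltb a n then f a else 0.
Proof.
  induction n; simpl; [reflexivity|]. rewrite IHn.
  destruct (Nat.eqb_spec n a), (Nat.ltb_spec a n), (Nat.ltb_spec a (S n)); subst; try lia; ring.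
Qed.

Definition dmove (d : Dir) (p : Jet * R) (x : R) : Jet * R :=
  match d with DirT => (fst p, x) | DirQ j i => (upd (fst p) j i x, snd p) end.

Definition dget (d : Dir) (p : Jet * R) : R :=
  match d with DirT => snd p | DirQ j i => fst p j i end.

Definition jeval (F : JF) (p : Jet * R) : R := F (fst p) (snd p).

Lemma has_pd_line d F z t v :
  has_pd d F z t v <-> derivable_pt_lim (fun x => jeval F (dmove d (z, t) x)) (dget d (z, t)) v.
Proof. destruct d; reflexivity. Qed.

Lemma has_pd_at d F p v :
  has_pd d F (fst p) (snd p) v <-> derivable_pt_lim (fun x => jeval F (dmove d p x)) (dget d p) v.
Proof. destruct p, d; reflexivity. Qed.

Lemma pd_unique d F z t v : has_pd d F z t v -> pd d F z t = v.
Proof.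
  intro H. unfold pd.
  assert (H' : has_pd d F z t (epsilon (inhabits 0) (fun v => has_pd d F z t v)))
    by (apply epsilon_spec; eauto).
  rewrite has_pd_line in H, H'. exact (uniqueness_limite _ _ _ _ H' H).
Qed.

Definition has_partials (F : JF) := forall d z t, exists v, has_pd d F z t v.

Lemma has_pd_pd d F z t : has_partials F -> has_pd d F z t (pd d F z t).
Proof. intro H. destruct (H d z t) as [v Hv]. now rewrite (pd_unique _ _ _ _ _ Hv). Qed.

Ltac upd_cases := unfold upd; repeat match goal with
  | |- context [Nat.eqb ?a ?b] => let E := fresh "E" in destruct (Nat.eqb_spec a b) as [E|E] end;
  simpl; subst; try lia; auto.

Lemma upd_same z j i : upd z j i (z j i) = z.
Proof. extensionality a; extensionality b. upd_cases. Qed.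

Lemma dmove_dget d p : dmove d p (dget d p) = p.
Proof. destruct p as [z t], d; simpl; now rewrite ?upd_same. Qed.

Lemma has_pd_plus d F G z t u v :
  has_pd d F z t u -> has_pd d G z t v -> has_pd d (fplus F G) z t (u + v).
Proof. rewrite !has_pd_line. destruct d; apply derivable_pt_lim_plus. Qed.

Lemma has_pd_mul d F G z t u v : has_pd d F z t u -> has_pd d G z t v ->
  has_pd d (fmul F G) z t (u * G z t + F z t * v).
Proof.
  rewrite !has_pd_line. intros HF HG.
  pose proof (derivable_pt_lim_mult _ _ _ _ _ HF HG) as H.
  cbv beta in H. rewrite dmove_dget in H. destruct d; exact H.
Qed.

Lemma has_pd_scal d c F z t u : has_pd d F z t u -> has_pd d (fscal c F) z t (c * u).
Proof. rewrite !has_pd_line. destruct d; apply derivable_pt_lim_scal. Qed.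

Lemma has_pd_cst d c z t : has_pd d (fcst c) z t 0.
Proof. rewrite has_pd_line. destruct d; apply derivable_pt_lim_const. Qed.

Lemma has_pd_fsumF d n f z t v : (forall a, (a < n)%nat -> has_pd d (f a) z t (v a)) ->
  has_pd d (fsumF n f) z t (fsum n v).
Proof.
  induction n; intro H; [apply has_pd_cst|].
  rewrite fsumF_S. apply has_pd_plus; auto.
Qed.

Definition kronecker (d : Dir) (j i : nat) : R :=
  match d with
  | DirT => 0
  | DirQ j' i' => if andb (Nat.eqb j j') (Nat.eqb i i') then 1 else 0
  end.

Lemma has_pd_coord d j i z t : has_pd d (coord j i) z t (kronecker d j i).
Proof.
  destruct d as [|j' i']; simpl; [apply derivable_pt_lim_const|].
  unfold coord, upd. destruct (andb _ _); [apply derivable_pt_lim_id|apply derivable_pt_lim_const].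
Qed.

Lemma has_partials_plus F G : has_partials F -> has_partials G -> has_partials (fplus F G).
Proof. intros HF HG d z t. eexists. apply has_pd_plus; apply has_pd_pd; auto. Qed.

Lemma has_partials_mul F G : has_partials F -> has_partials G -> has_partials (fmul F G).
Proof. intros HF HG d z t. eexists. apply has_pd_mul; apply has_pd_pd; auto. Qed.

Lemma has_partials_scal c F : has_partials F -> has_partials (fscal c F).
Proof. intros HF d z t. eexists. apply has_pd_scal, has_pd_pd; auto. Qed.

Lemma has_partials_cst c : has_partials (fcst c).
Proof. intros d z t. eexists. apply has_pd_cst. Qed.

Lemma has_partials_coord j i : has_partials (coord j i).
Proof. intros d z t. eexists. apply has_pd_coord. Qed.

Lemma pd_plus d F G : has_partials F -> has_partials G ->
  pd d (fplus F G) = fplus (pd d F) (pd d G).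
Proof.
  intros. extensionality z; extensionality t.
  apply pd_unique, has_pd_plus; apply has_pd_pd; auto.
Qed.

Lemma pd_mul d F G : has_partials F -> has_partials G ->
  pd d (fmul F G) = fplus (fmul (pd d F) G) (fmul F (pd d G)).
Proof.
  intros. extensionality z; extensionality t.
  apply pd_unique, has_pd_mul; apply has_pd_pd; auto.
Qed.

Lemma pd_scal d c F : has_partials F -> pd d (fscal c F) = fscal c (pd d F).
Proof. intros. extensionality z; extensionality t. apply pd_unique, has_pd_scal, has_pd_pd; auto. Qed.

Lemma pd_cst d c : pd d (fcst c) = fcst 0.
Proof. extensionality z; extensionality t. apply pd_unique, has_pd_cst. Qed.

Lemma pd_coord d j i : pd d (coord j i) = fcst (kronecker d j i).
Proof. extensionality z; extensionality t. apply pd_unique, has_pd_coord. Qed.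

Lemma depends_upto_mono l K K' F : (K <= K')%nat -> depends_upto l K F -> depends_upto l K' F.
Proof. intros HK H z z' t Hz. apply H. intros; apply Hz; lia. Qed.

Lemma depends_upto_plus l K F G :
  depends_upto l K F -> depends_upto l K G -> depends_upto l K (fplus F G).
Proof. intros HF HG z z' t Hz. unfold fplus. now rewrite (HF z z' t), (HG z z' t). Qed.

Lemma depends_upto_mul l K F G :
  depends_upto l K F -> depends_upto l K G -> depends_upto l K (fmul F G).
Proof. intros HF HG z z' t Hz. unfold fmul. now rewrite (HF z z' t), (HG z z' t). Qed.

Lemma depends_upto_scal l K c F : depends_upto l K F -> depends_upto l K (fscal c F).
Proof. intros HF z z' t Hz. unfold fscal. now rewrite (HF z z' t). Qed.

Lemma depends_upto_cst l K c : depends_upto l K (fcst c).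
Proof. intros z z' t _. reflexivity. Qed.

Lemma depends_upto_coord l K j i : (j <= K)%nat -> (i < l)%nat -> depends_upto l K (coord j i).
Proof. intros Hj Hi z z' t Hz. unfold coord. auto. Qed.

Lemma has_pd_irrelevant l K F j i z t : depends_upto l K F -> (K < j \/ l <= i)%nat ->
  has_pd (DirQ j i) F z t 0.
Proof.
  intros HF Hji. simpl.
  replace (fun x => F (upd z j i x) t) with (fun _ : R => F z t);
    [apply derivable_pt_lim_const|].
  extensionality x. apply HF. intros j' i' Hj' Hi'. upd_cases.
Qed.

Lemma pd_irrelevant l K F j i : depends_upto l K F -> (K < j \/ l <= i)%nat ->
  pd (DirQ j i) F = fcst 0.
Proof. intros. extensionality z; extensionality t. apply pd_unique. eapply has_pd_irrelevant; eauto. Qed.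

Lemma depends_upto_pd l K F d :
  has_partials F -> depends_upto l K F -> depends_upto l K (pd d F).
Proof.
  intros HP HF z z' t Hz.
  destruct d as [|j i].
  - symmetry; apply pd_unique. simpl.
    replace (fun s => F z' s) with (fun s => F z s)
      by (extensionality s; apply HF; auto).
    exact (has_pd_pd DirT F z t HP).
  - destruct (Compare_dec.le_lt_dec j K) as [Hj|Hj]; [destruct (Compare_dec.lt_dec i l) as [Hi|Hi]|];
      [|rewrite (pd_irrelevant l K F j i HF); [reflexivity|lia]..].
    symmetry; apply pd_unique. simpl. rewrite <- (Hz j i Hj Hi).
    replace (fun x => F (upd z' j i x) t) with (fun x => F (upd z j i x) t)
      by (extensionality x; apply HF; intros; unfold upd; destruct (andb _ _); auto).
    exact (has_pd_pd (DirQ j i) F z t HP).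
Qed.

Lemma jcont_mono l K K' F : (K <= K')%nat -> jcont l K F -> jcont l K' F.
Proof.
  intros HK H z t eps He. destruct (H z t eps He) as [del [Hd H']].
  exists del; split; auto. intros z' t' Hz Ht. apply H'; auto. intros; apply Hz; lia.
Qed.

Lemma jcont_cst l K c : jcont l K (fcst c).
Proof. intros z t eps He. exists 1; split; [lra|]. intros. unfold fcst. now rewrite Rminus_diag, Rabs_R0. Qed.

Lemma jcont_coord l K j i : (j <= K)%nat -> (i < l)%nat -> jcont l K (coord j i).
Proof. intros Hj Hi z t eps He. exists eps; split; auto. intros z' t' Hz _. apply Hz; auto. Qed.

Lemma jcont_plus l K F G : jcont l K F -> jcont l K G -> jcont l K (fplus F G).
Proof.
  intros HF HG z t eps He.
  destruct (HF z t (eps / 2)) as [d1 [Hd1 HF']]; [lra|].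
  destruct (HG z t (eps / 2)) as [d2 [Hd2 HG']]; [lra|].
  exists (Rmin d1 d2); split; [apply Rmin_pos; auto|].
  intros z' t' Hz Ht. pose proof (Rmin_l d1 d2). pose proof (Rmin_r d1 d2).
  assert (A1 : Rabs (F z' t' - F z t) < eps / 2)
    by (apply HF'; [intros j i Hj Hi; specialize (Hz j i Hj Hi)|]; lra).
  assert (A2 : Rabs (G z' t' - G z t) < eps / 2)
    by (apply HG'; [intros j i Hj Hi; specialize (Hz j i Hj Hi)|]; lra).
  unfold fplus.
  replace (F z' t' + G z' t' - (F z t + G z t)) with ((F z' t' - F z t) + (G z' t' - G z t)) by ring.
  eapply Rle_lt_trans; [apply Rabs_triang|]. lra.
Qed.

Lemma Rabs_mul_sub_le a b x y :
  Rabs (x * y - a * b) <= Rabs (x - a) * Rabs (y - b) + Rabs a * Rabs (y - b) + Rabs b * Rabs (x - a).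
Proof.
  replace (x * y - a * b) with ((x - a) * (y - b) + a * (y - b) + b * (x - a)) by ring.
  rewrite <- !Rabs_mult.
  eapply Rle_trans; [apply Rabs_triang|]. apply Rplus_le_compat_r, Rabs_triang.
Qed.

Lemma jcont_mul l K F G : jcont l K F -> jcont l K G -> jcont l K (fmul F G).
Proof.
  intros HF HG z t eps He.
  set (a := F z t). set (b := G z t).
  pose proof (Rabs_pos a). pose proof (Rabs_pos b).
  set (e := Rmin 1 (eps / (2 * (1 + Rabs a + Rabs b)))).
  assert (He0 : 0 < e) by (apply Rmin_pos; [lra|apply Rdiv_lt_0_compat; lra]).
  assert (He1 : e <= 1) by apply Rmin_l.
  assert (He2 : e * (1 + Rabs a + Rabs b) <= eps / 2).
  { apply Rle_trans with (eps / (2 * (1 + Rabs a + Rabs b)) * (1 + Rabs a + Rabs b)).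
    - apply Rmult_le_compat_r; [lra|apply Rmin_r].
    - right. field. lra. }
  destruct (HF z t e He0) as [d1 [Hd1 HF']].
  destruct (HG z t e He0) as [d2 [Hd2 HG']].
  exists (Rmin d1 d2); split; [apply Rmin_pos; auto|].
  intros z' t' Hz Ht. pose proof (Rmin_l d1 d2). pose proof (Rmin_r d1 d2).
  assert (A1 : Rabs (F z' t' - a) < e) by (apply HF'; [intros j i Hj Hi; specialize (Hz j i Hj Hi)|]; lra).
  assert (A2 : Rabs (G z' t' - b) < e) by (apply HG'; [intros j i Hj Hi; specialize (Hz j i Hj Hi)|]; lra).
  unfold fmul. fold a b.
  pose proof (Rabs_mul_sub_le a b (F z' t') (G z' t')).
  pose proof (Rabs_pos (F z' t' - a)). pose proof (Rabs_pos (G z' t' - b)).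
  nra.
Qed.

Lemma jcont_scal l K c F : jcont l K F -> jcont l K (fscal c F).
Proof. intro H. apply (jcont_mul l K (fcst c) F); auto using jcont_cst. Qed.

Lemma pds_app ds d F : pds (ds ++ d :: nil) F = pds ds (pd d F).
Proof. unfold pds. now rewrite fold_right_app. Qed.

Lemma pds_plus ds F G :
  (forall ds', (length ds' < length ds)%nat -> has_partials (pds ds' F) /\ has_partials (pds ds' G)) ->
  pds ds (fplus F G) = fplus (pds ds F) (pds ds G).
Proof.
  induction ds as [|d ds IH]; intro H; [reflexivity|].
  change (pd d (pds ds (fplus F G)) = fplus (pd d (pds ds F)) (pd d (pds ds G))).
  rewrite IH by (intros; apply H; simpl; lia).
  destruct (H ds) as [HF HG]; [simpl; lia|]. now apply pd_plus.
Qed.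

Lemma pds_scal ds c F :
  (forall ds', (length ds' < length ds)%nat -> has_partials (pds ds' F)) ->
  pds ds (fscal c F) = fscal c (pds ds F).
Proof.
  induction ds as [|d ds IH]; intro H; [reflexivity|].
  change (pd d (pds ds (fscal c F)) = fscal c (pd d (pds ds F))).
  rewrite IH by (intros; apply H; simpl; lia).
  apply pd_scal, H; simpl; lia.
Qed.

Lemma pds_cst ds c : exists c', pds ds (fcst c) = fcst c'.
Proof.
  induction ds as [|d ds [c' E]]; [now exists c|].
  exists 0. change (pd d (pds ds (fcst c)) = fcst 0). rewrite E. apply pd_cst.
Qed.

Lemma pds_coord ds j i : pds ds (coord j i) = coord j i \/ exists c, pds ds (coord j i) = fcst c.
Proof.
  induction ds as [|d ds IH]; [now left|]. right.
  change (exists c, pd d (pds ds (coord j i)) = fcst c).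
  destruct IH as [E|[c E]]; rewrite E; eexists; [apply pd_coord|apply pd_cst].
Qed.

Definition Cn (l K n : nat) (F : JF) : Prop :=
  forall ds, (length ds <= n)%nat -> has_partials (pds ds F) /\ jcont l K (pds ds F).

Lemma smooth_iff l K F : smooth l K F <-> depends_upto l K F /\ forall n, Cn l K n F.
Proof.
  unfold smooth, Cn. split; intros [HD HC]; split; auto.
  - intros n ds _. apply HC.
  - intro ds. apply (HC (length ds)). lia.
Qed.

Lemma Cn_pred l K n F : Cn l K (S n) F -> Cn l K n F.
Proof. intros H ds Hl. apply H; lia. Qed.

Lemma Cn_pd l K n d F : Cn l K (S n) F -> Cn l K n (pd d F).
Proof. intros H ds Hl. rewrite <- pds_app. apply H. rewrite length_app; simpl; lia. Qed.

Lemma Cn_plus l K n F G : Cn l K n F -> Cn l K n G -> Cn l K n (fplus F G).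
Proof.
  intros HF HG ds Hl. rewrite pds_plus by (intros; split; [apply HF|apply HG]; lia).
  destruct (HF ds Hl), (HG ds Hl).
  split; [apply has_partials_plus|apply jcont_plus]; auto.
Qed.

Lemma Cn_scal l K n c F : Cn l K n F -> Cn l K n (fscal c F).
Proof.
  intros HF ds Hl. rewrite pds_scal by (intros; apply HF; lia).
  destruct (HF ds Hl). split; [apply has_partials_scal|apply jcont_scal]; auto.
Qed.

Lemma Cn_cst l K n c : Cn l K n (fcst c).
Proof.
  intros ds _. destruct (pds_cst ds c) as [c' ->].
  split; [apply has_partials_cst|apply jcont_cst].
Qed.

Lemma Cn_coord l K n j i : (j <= K)%nat -> (i < l)%nat -> Cn l K n (coord j i).
Proof.
  intros Hj Hi ds _. destruct (pds_coord ds j i) as [->|[c ->]].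
  - split; [apply has_partials_coord|apply jcont_coord; auto].
  - split; [apply has_partials_cst|apply jcont_cst].
Qed.

(** Induction on [n], peeling off the innermost partial derivative by the product rule. *)
Lemma Cn_mul l K n : forall F G, Cn l K n F -> Cn l K n G -> Cn l K n (fmul F G).
Proof.
  induction n as [|n IH]; intros F G HF HG ds Hl;
    destruct (HF nil) as [PF CF], (HG nil) as [PG CG]; try (simpl; lia).
  all: induction ds as [|d ds _] using rev_ind;
    [split; [apply has_partials_mul|apply jcont_mul]; auto|].
  all: rewrite length_app in Hl; simpl in Hl; try lia.
  rewrite pds_app, pd_mul by auto.
  apply (Cn_plus l K n); [| |lia].
  - apply IH; [apply Cn_pd|apply Cn_pred]; auto.
  - apply IH; [apply Cn_pred|apply Cn_pd]; auto.
Qed.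

Lemma smooth_has_partials l K F : smooth l K F -> has_partials F.
Proof. intros [_ H]. exact (proj1 (H nil)). Qed.

Lemma smooth_depends_upto l K F : smooth l K F -> depends_upto l K F.
Proof. intros [H _]. exact H. Qed.

Lemma smooth_jcont l K F : smooth l K F -> jcont l K F.
Proof. intros [_ H]. exact (proj2 (H nil)). Qed.

Lemma smooth_mono l K K' F : (K <= K')%nat -> smooth l K F -> smooth l K' F.
Proof.
  intros HK [HD HC]. split; [eapply depends_upto_mono; eauto|].
  intro ds; destruct (HC ds); split; auto. eapply jcont_mono; eauto.
Qed.

Lemma smooth_plus l K F G : smooth l K F -> smooth l K G -> smooth l K (fplus F G).
Proof.
  rewrite !smooth_iff. intros [] [].
  split; [apply depends_upto_plus|intro; apply Cn_plus]; auto.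
Qed.

Lemma smooth_mul l K F G : smooth l K F -> smooth l K G -> smooth l K (fmul F G).
Proof.
  rewrite !smooth_iff. intros [] [].
  split; [apply depends_upto_mul|intro; apply Cn_mul]; auto.
Qed.

Lemma smooth_scal l K c F : smooth l K F -> smooth l K (fscal c F).
Proof. rewrite !smooth_iff. intros []. split; [apply depends_upto_scal|intro; apply Cn_scal]; auto. Qed.

Lemma smooth_cst l K c : smooth l K (fcst c).
Proof. rewrite smooth_iff. split; [apply depends_upto_cst|intro; apply Cn_cst]. Qed.

Lemma smooth_coord l K j i : (j <= K)%nat -> (i < l)%nat -> smooth l K (coord j i).
Proof. intros. rewrite smooth_iff. split; [apply depends_upto_coord|intro; apply Cn_coord]; auto. Qed.

Lemma smooth_pd l K d F : smooth l K F -> smooth l K (pd d F).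
Proof.
  intro H. pose proof (smooth_has_partials _ _ _ H) as HP. rewrite smooth_iff in *.
  destruct H. split; [apply depends_upto_pd|intro; apply Cn_pd]; auto.
Qed.

Lemma smooth_fsumF l K n f :
  (forall a, (a < n)%nat -> smooth l K (f a)) -> smooth l K (fsumF n f).
Proof.
  induction n; intro H; [apply smooth_cst|].
  rewrite fsumF_S. apply smooth_plus; auto.
Qed.

(** * Symmetry of second partial derivatives *)

Definition distinct_dirs (d1 d2 : Dir) : Prop :=
  match d1, d2 with
  | DirT, DirT => False
  | DirQ j i, DirQ j' i' => j <> j' \/ i <> i'
  | _, _ => True
  end.

Lemma distinct_dirs_sym d1 d2 : distinct_dirs d1 d2 -> distinct_dirs d2 d1.
Proof. destruct d1, d2; simpl; auto; intros [H|H]; [left|right]; congruence. Qed.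

Lemma dmove_dmove d p x y : dmove d (dmove d p x) y = dmove d p y.
Proof. destruct d; simpl; f_equal. extensionality a; extensionality b. upd_cases. Qed.

Lemma dmove_comm d1 d2 p x y : distinct_dirs d1 d2 ->
  dmove d1 (dmove d2 p y) x = dmove d2 (dmove d1 p x) y.
Proof.
  destruct d1, d2; simpl; try tauto; intros; f_equal.
  extensionality a; extensionality b. upd_cases.
Qed.

Lemma dget_dmove d p x : dget d (dmove d p x) = x.
Proof. destruct d; simpl; [reflexivity|]. upd_cases. Qed.

Lemma dget_dmove_other d1 d2 p x : distinct_dirs d1 d2 -> dget d2 (dmove d1 p x) = dget d2 p.
Proof. destruct d1, d2; simpl; try tauto; intros; upd_cases. Qed.

Lemma dmove_close d p x :
  (forall j i, Rabs (fst (dmove d p x) j i - fst p j i) <= Rabs (x - dget d p)) /\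
  Rabs (snd (dmove d p x) - snd p) <= Rabs (x - dget d p).
Proof.
  destruct d as [|j' i']; simpl; split; try intros j i;
    match goal with |- _ <= Rabs ?e => pose proof (Rabs_pos e) end;
    rewrite ?Rminus_diag, ?Rabs_R0; try lra.
  unfold upd. destruct (andb _ _) eqn:E; [|rewrite Rminus_diag, Rabs_R0; lra].
  apply Bool.andb_true_iff in E as [E1 E2]. apply Nat.eqb_eq in E1, E2. subst. lra.
Qed.

Lemma Rabs_sub_triang a b c : Rabs (a - c) <= Rabs (a - b) + Rabs (b - c).
Proof. replace (a - c) with ((a - b) + (b - c)) by ring. apply Rabs_triang. Qed.

(** Coquelicot's [Schwarz] concerns functions of two reals: [F] is restricted to the coordinate
    plane through [p] spanned by the directions [d1] and [d2]. *)
Definition plane (d1 d2 : Dir) (p : Jet * R) (u v : R) : Jet * R := dmove d2 (dmove d1 p u) v.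

Lemma plane_center d1 d2 p : distinct_dirs d1 d2 -> plane d1 d2 p (dget d1 p) (dget d2 p) = p.
Proof.
  intro H. unfold plane.
  rewrite <- (dget_dmove_other d1 d2 p (dget d1 p)) by exact H.
  now rewrite !dmove_dget.
Qed.

Lemma plane_move_fst d1 d2 p u v x : distinct_dirs d1 d2 ->
  dmove d1 (plane d1 d2 p u v) x = plane d1 d2 p x v.
Proof. intro Hd. unfold plane. now rewrite dmove_comm, dmove_dmove. Qed.

Lemma plane_move_snd d1 d2 p u v x : dmove d2 (plane d1 d2 p u v) x = plane d1 d2 p u x.
Proof. apply dmove_dmove. Qed.

Lemma plane_dget_fst d1 d2 p u v : distinct_dirs d1 d2 -> dget d1 (plane d1 d2 p u v) = u.
Proof. intro Hd. unfold plane. now rewrite dget_dmove_other, dget_dmove by now apply distinct_dirs_sym. Qed.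

Lemma plane_dget_snd d1 d2 p u v : dget d2 (plane d1 d2 p u v) = v.
Proof. apply dget_dmove. Qed.

Lemma is_derive_plane_fst d1 d2 G p u v : distinct_dirs d1 d2 -> has_partials G ->
  is_derive (fun w => jeval G (plane d1 d2 p w v)) u (jeval (pd d1 G) (plane d1 d2 p u v)).
Proof.
  intros Hd HG. apply is_derive_Reals.
  pose proof (proj1 (has_pd_at d1 G (plane d1 d2 p u v) _) (has_pd_pd _ _ _ _ HG)) as H.
  rewrite plane_dget_fst in H by exact Hd.
  replace (fun x => jeval G (dmove d1 (plane d1 d2 p u v) x))
    with (fun w => jeval G (plane d1 d2 p w v)) in H
    by (extensionality x; now rewrite plane_move_fst).
  exact H.
Qed.

Lemma is_derive_plane_snd d1 d2 G p u v : has_partials G ->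
  is_derive (fun w => jeval G (plane d1 d2 p u w)) v (jeval (pd d2 G) (plane d1 d2 p u v)).
Proof.
  intro HG. apply is_derive_Reals.
  pose proof (proj1 (has_pd_at d2 G (plane d1 d2 p u v) _) (has_pd_pd _ _ _ _ HG)) as H.
  rewrite plane_dget_snd in H.
  replace (fun x => jeval G (dmove d2 (plane d1 d2 p u v) x))
    with (fun w => jeval G (plane d1 d2 p u w)) in H
    by (extensionality x; now rewrite plane_move_snd).
  exact H.
Qed.

Lemma continuity_2d_plane l K G d1 d2 p : distinct_dirs d1 d2 -> jcont l K G ->
  continuity_2d_pt (fun u v => jeval G (plane d1 d2 p u v)) (dget d1 p) (dget d2 p).
Proof.
  intros Hd HG eps. rewrite plane_center by exact Hd.
  destruct (HG (fst p) (snd p) eps (cond_pos eps)) as [del [Hdel H]].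
  assert (Hdel2 : 0 < del / 2) by lra.
  exists (mkposreal _ Hdel2). simpl. intros u v Hu Hv.
  destruct (dmove_close d1 p u) as [Cz1 Ct1].
  destruct (dmove_close d2 (dmove d1 p u) v) as [Cz2 Ct2].
  rewrite dget_dmove_other in Cz2, Ct2 by exact Hd.
  apply H; unfold plane.
  - intros j i _ _. specialize (Cz1 j i). specialize (Cz2 j i).
    eapply Rle_lt_trans; [apply Rabs_sub_triang with (b := fst (dmove d1 p u) j i)|]. lra.
  - eapply Rle_lt_trans; [apply Rabs_sub_triang with (b := snd (dmove d1 p u))|]. lra.
Qed.

Lemma pd_comm_distinct l K F d1 d2 : distinct_dirs d1 d2 -> smooth l K F ->
  pd d1 (pd d2 F) = pd d2 (pd d1 F).
Proof.
  intros Hd HF. extensionality z; extensionality t.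
  pose proof (smooth_has_partials _ _ _ HF) as P.
  pose proof (smooth_has_partials _ _ _ (smooth_pd l K d1 F HF)) as P1.
  pose proof (smooth_has_partials _ _ _ (smooth_pd l K d2 F HF)) as P2.
  set (p := (z, t)). set (f := fun u v => jeval F (plane d1 d2 p u v)).
  assert (D2 : forall u v, Derive (fun s => f u s) v = jeval (pd d2 F) (plane d1 d2 p u v))
    by (intros; apply is_derive_unique, is_derive_plane_snd; auto).
  assert (D1 : forall u v, Derive (fun s => f s v) u = jeval (pd d1 F) (plane d1 d2 p u v))
    by (intros; apply is_derive_unique, is_derive_plane_fst; auto).
  assert (D12 : forall u v, is_derive (fun w => Derive (fun s => f w s) v) u
                              (jeval (pd d1 (pd d2 F)) (plane d1 d2 p u v))).
  { intros. eapply is_derive_ext; [intro; symmetry; apply D2|]. apply is_derive_plane_fst; auto. }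
  assert (D21 : forall u v, is_derive (fun w => Derive (fun s => f s w) u) v
                              (jeval (pd d2 (pd d1 F)) (plane d1 d2 p u v))).
  { intros. eapply is_derive_ext; [intro; symmetry; apply D1|]. apply is_derive_plane_snd; auto. }
  assert (E12 : (fun u v => Derive (fun w => Derive (fun s => f w s) v) u)
              = (fun u v => jeval (pd d1 (pd d2 F)) (plane d1 d2 p u v)))
    by (extensionality u; extensionality v; apply is_derive_unique, D12).
  assert (E21 : (fun u v => Derive (fun w => Derive (fun s => f s w) u) v)
              = (fun u v => jeval (pd d2 (pd d1 F)) (plane d1 d2 p u v)))
    by (extensionality u; extensionality v; apply is_derive_unique, D21).
  pose proof (Schwarz f (dget d1 p) (dget d2 p)) as S.
  rewrite (equal_f (equal_f E12 _) _), (equal_f (equal_f E21 _) _), plane_center in S by exact Hd.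
  apply S; [|rewrite E12|rewrite E21]; try (apply (continuity_2d_plane l K); auto;
    apply smooth_jcont, smooth_pd, smooth_pd, HF).
  exists (mkposreal 1 Rlt_0_1). intros u v _ _.
  repeat split; eexists; eauto using is_derive_plane_fst, is_derive_plane_snd.
Qed.

Lemma pd_comm l K F d1 d2 : smooth l K F -> pd d1 (pd d2 F) = pd d2 (pd d1 F).
Proof.
  intro HF.
  destruct d1 as [|j i], d2 as [|j' i']; [reflexivity| | |];
    try (apply (pd_comm_distinct l K); simpl; auto; fail).
  destruct (Nat.eq_dec j j'), (Nat.eq_dec i i'); subst; [reflexivity|..];
    apply (pd_comm_distinct l K); simpl; auto.
Qed.

Lemma exists_least_nat (P : nat -> Prop) n : P n -> exists m, P m /\ forall k, P k -> (m <= k)%nat.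
Proof.
  revert P. induction n as [n IH] using Wf_nat.lt_wf_ind. intros P Hn.
  destruct (classic (exists k, (k < n)%nat /\ P k)) as [[k [Hk Pk]]|Hno]; [exact (IH k Hk P Pk)|].
  exists n. split; auto. intros k Pk.
  destruct (Compare_dec.le_lt_dec n k); auto. exfalso; eauto.
Qed.

Lemma jorder_spec l K F : depends_upto l K F ->
  depends_upto l (jorder l F) F /\ (jorder l F <= K)%nat.
Proof.
  intro H. unfold jorder.
  destruct (epsilon_spec (inhabits 0%nat)
    (fun K => depends_upto l K F /\ forall K', depends_upto l K' F -> (K <= K')%nat)) as [A B].
  - exact (exists_least_nat _ K H).
  - auto.
Qed.

(** The total derivative with the sum over [j] cut at an explicit bound [M]; unlike [tder],
    it does not involve [jorder], so it is amenable to algebra. *)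
Definition tder_upto (l M : nat) (F : JF) : JF :=
  fplus (pd DirT F) (fsumF M (fun j => fsumF l (fun i => fmul (pd (DirQ j i) F) (coord (S j) i)))).

Lemma tder_eq_upto l K M F : depends_upto l K F -> (K < M)%nat -> tder l F = tder_upto l M F.
Proof.
  intros H HM. destruct (jorder_spec l K F H) as [HJ HJK].
  extensionality z; extensionality t. unfold tder, tder_upto, fplus, fsumF, fmul, coord, pdt, pdq.
  f_equal. symmetry. apply fsum_tail; [lia|]. intros a Ha.
  apply fsum_zero. intros i Hi.
  rewrite (pd_irrelevant l (jorder l F) F a i) by (auto; lia). unfold fcst. ring.
Qed.

Lemma tder_upto_linear l M H F G (A B : JF) :
  (forall d z t, pd d H z t = A z t * pd d F z t + B z t * pd d G z t) ->
  forall z t, tder_upto l M H z t = A z t * tder_upto l M F z t + B z t * tder_upto l M G z t.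
Proof.
  intros E z t. unfold tder_upto, fplus, fsumF, fmul, coord. rewrite E.
  rewrite (fsum_ext M _ (fun j => A z t * fsum l (fun i => pd (DirQ j i) F z t * z (S j) i)
                              + B z t * fsum l (fun i => pd (DirQ j i) G z t * z (S j) i))).
  - rewrite fsum_plus, !fsum_scal. ring.
  - intros j Hj. rewrite <- !fsum_scal, <- fsum_plus. apply fsum_ext. intros i Hi.
    rewrite E. ring.
Qed.

Lemma smooth_tder l K F : smooth l K F -> smooth l (S K) (tder l F).
Proof.
  intro HF. rewrite (tder_eq_upto l K (S K)) by (auto using smooth_depends_upto).
  apply smooth_plus.
  - apply smooth_mono with K; auto using smooth_pd.
  - apply smooth_fsumF; intros j Hj; apply smooth_fsumF; intros i Hi. apply smooth_mul.
    + apply smooth_mono with K; auto using smooth_pd.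
    + apply smooth_coord; lia.
Qed.

Lemma smooth_tdern l K m F : smooth l K F -> smooth l (m + K) (tdern l m F).
Proof. intro H. induction m; [exact H|]. apply smooth_tder; auto. Qed.

Lemma smooth_tdern0 l m F : smooth l 0 F -> smooth l m (tdern l m F).
Proof. intro H. rewrite <- (Nat.add_0_r m) at 1. apply smooth_tdern, H. Qed.

Lemma smooth_tdern_sub l p r A : smooth l (S p) A -> (p <= r)%nat ->
  smooth l (S r) (tdern l (r - p) A).
Proof. intros HA Hpr. replace (S r) with ((r - p) + S p)%nat by lia. now apply smooth_tdern. Qed.

Section TderRules.

Variables (l K : nat) (F G : JF).
Hypotheses (HF : smooth l K F) (HG : smooth l K G).

Let PF := smooth_has_partials _ _ _ HF.
Let PG := smooth_has_partials _ _ _ HG.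
Let DF := smooth_depends_upto _ _ _ HF.
Let DG := smooth_depends_upto _ _ _ HG.

Lemma tder_plus : tder l (fplus F G) = fplus (tder l F) (tder l G).
Proof.
  rewrite !(tder_eq_upto l K (S K)) by auto using depends_upto_plus.
  extensionality z; extensionality t.
  rewrite (tder_upto_linear l (S K) (fplus F G) F G (fcst 1) (fcst 1)).
  - unfold fcst, fplus; ring.
  - intros. rewrite pd_plus by auto. unfold fcst, fplus; ring.
Qed.

Lemma tder_mul : tder l (fmul F G) = fplus (fmul (tder l F) G) (fmul F (tder l G)).
Proof.
  rewrite !(tder_eq_upto l K (S K)) by auto using depends_upto_mul.
  extensionality z; extensionality t.
  rewrite (tder_upto_linear l (S K) (fmul F G) F G G F).
  - unfold fplus, fmul. ring.
  - intros. rewrite pd_mul by auto. unfold fplus, fmul. ring.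
Qed.

Lemma tder_scal c : tder l (fscal c F) = fscal c (tder l F).
Proof.
  rewrite !(tder_eq_upto l K (S K)) by auto using depends_upto_scal.
  extensionality z; extensionality t.
  rewrite (tder_upto_linear l (S K) (fscal c F) F F (fcst c) (fcst 0)).
  - unfold fcst, fscal; ring.
  - intros. rewrite pd_scal by auto. unfold fcst, fscal; ring.
Qed.

End TderRules.

Lemma tder_cst l c : tder l (fcst c) = fcst 0.
Proof.
  rewrite (tder_eq_upto l 0 1 (fcst c)) by auto using depends_upto_cst.
  extensionality z; extensionality t.
  rewrite (tder_upto_linear l 1 (fcst c) (fcst c) (fcst c) (fcst 0) (fcst 0)).
  - unfold fcst; ring.
  - intros. rewrite pd_cst. unfold fcst; ring.
Qed.

Lemma tder_fsumF l K n f : (forall a, (a < n)%nat -> smooth l K (f a)) ->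
  tder l (fsumF n f) = fsumF n (fun a => tder l (f a)).
Proof.
  induction n; intro H; [apply tder_cst|].
  rewrite !fsumF_S, (tder_plus l K), IHn; auto using smooth_fsumF.
Qed.

Definition pd_lower (j i : nat) (F : JF) : JF :=
  match j with O => fcst 0 | S j' => pd (DirQ j' i) F end.

Lemma fsum_kronecker_inner l j i j' (g : nat -> R) : (i < l)%nat ->
  fsum l (fun i' => g i' * kronecker (DirQ j i) (S j') i') = if Nat.eqb (S j') j then g i else 0.
Proof.
  intro Hi. unfold kronecker. destruct (Nat.eqb (S j') j); cbn [andb].
  - rewrite (fsum_ext l _ (fun i' => if Nat.eqb i' i then g i' else 0))
      by (intros a _; destruct (Nat.eqb a i); ring).
    rewrite fsum_delta. destruct (Nat.ltb_spec i l); [reflexivity|lia].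
  - apply fsum_zero. intros. ring.
Qed.

Lemma fsum_kronecker_outer l K F M j i z t : depends_upto l K F -> (K < M)%nat ->
  fsum M (fun j' => if Nat.eqb (S j') j then pd (DirQ j' i) F z t else 0) = pd_lower j i F z t.
Proof.
  intros H HM. unfold pd_lower. destruct j as [|j]; [apply fsum_zero; reflexivity|].
  rewrite (fsum_ext M _ (fun j' => if Nat.eqb j' j then pd (DirQ j' i) F z t else 0))
    by reflexivity.
  rewrite fsum_delta. destruct (Nat.ltb_spec j M); [reflexivity|].
  now rewrite (pd_irrelevant l K F j i H) by lia.
Qed.

(** Differentiating [dF/dt = d_t F + sum_j' q^(j'+1) . grad_(q^(j')) F] in [q^(j)_i]: the
    coefficient [q^(j'+1)_i] contributes only for [j' + 1 = j], and the other terms reassemble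
    into [d/dt d_(q^(j)_i) F] once the partial derivatives are commuted. *)
Lemma pd_tder l K F j i : smooth l K F -> (i < l)%nat ->
  pd (DirQ j i) (tder l F) = fplus (tder l (pd (DirQ j i) F)) (pd_lower j i F).
Proof.
  intros HF Hi.
  pose proof (smooth_depends_upto _ _ _ HF) as HD.
  pose proof (smooth_has_partials _ _ _ HF) as HP.
  assert (HPp : forall d, has_partials (pd d F))
    by (intro; eapply smooth_has_partials, smooth_pd; eauto).
  rewrite (tder_eq_upto l K (S K) F), (tder_eq_upto l K (S K) (pd (DirQ j i) F))
    by auto using depends_upto_pd.
  extensionality z; extensionality t.
  erewrite pd_unique.
  2:{ apply has_pd_plus; [apply has_pd_pd, HPp|].
      apply has_pd_fsumF; intros j' Hj'; apply has_pd_fsumF; intros i' Hi'.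
      apply has_pd_mul; [apply has_pd_pd, HPp|apply has_pd_coord]. }
  unfold tder_upto, fplus, fsumF, fmul, coord.
  rewrite (pd_comm l K F (DirQ j i) DirT HF).
  rewrite (fsum_ext (S K) _ (fun j' =>
      fsum l (fun i' => pd (DirQ j' i') (pd (DirQ j i) F) z t * z (S j') i')
      + (if Nat.eqb (S j') j then pd (DirQ j' i) F z t else 0))).
  - rewrite fsum_plus, (fsum_kronecker_outer l K) by (auto; lia). ring.
  - intros j' Hj'. rewrite <- (fsum_kronecker_inner l j i j' (fun i' => pd (DirQ j' i') F z t)), <- fsum_plus
      by exact Hi.
    apply fsum_ext. intros i' Hi'.
    rewrite (pd_comm l K F (DirQ j i) (DirQ j' i') HF). ring.
Qed.

Lemma Op_plus l K r A B k : smooth l K A -> smooth l K B ->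
  Op l r (fplus A B) k = fplus (Op l r A k) (Op l r B k).
Proof.
  intros HA HB. extensionality z; extensionality t. unfold Op, pdq.
  rewrite !pd_plus by eauto using smooth_has_partials.
  rewrite (tder_plus l K) by auto using smooth_pd. unfold fplus. ring.
Qed.

Lemma Op_scal l K r c A k : smooth l K A -> Op l r (fscal c A) k = fscal c (Op l r A k).
Proof.
  intro HA. extensionality z; extensionality t. unfold Op, pdq.
  rewrite !pd_scal by eauto using smooth_has_partials.
  rewrite (tder_scal l K) by auto using smooth_pd. unfold fscal. ring.
Qed.

Lemma Op_of_order l p F k : smooth l p F -> Op l p F k = pdq p k F.
Proof.
  intro HF. extensionality z; extensionality t. unfold Op, pdq.
  rewrite (pd_irrelevant l p F (S p) k) by (auto using smooth_depends_upto; lia).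
  rewrite tder_cst. unfold fcst. ring.
Qed.

(** By [pd_tder], [d/dt d_(q^(p+1)) Y] occurs with weight [1] in the first term of
    [O_(p+1)[dY/dt]] and with weight [-(p+2)] in the second, leaving the [-(p+1)] of [O_p[Y]]. *)
Lemma Op_tder l p Y k : smooth l (S p) Y -> (k < l)%nat ->
  Op l (S p) (tder l Y) k = Op l p Y k.
Proof.
  intros HY Hk. extensionality z; extensionality t. unfold Op, pdq.
  rewrite (pd_tder l (S p) Y (S p) k HY Hk), (pd_tder l (S p) Y (S (S p)) k HY Hk).
  cbn [pd_lower].
  rewrite (pd_irrelevant l (S p) Y (S (S p)) k) by (auto using smooth_depends_upto; lia).
  rewrite tder_cst, fplus_0l. unfold fplus, fcst. rewrite !S_INR. ring.
Qed.

Lemma Op_tdern_sub l p r Y k : smooth l (S p) Y -> (k < l)%nat -> (p <= r)%nat ->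
  Op l r (tdern l (r - p) Y) k = Op l p Y k.
Proof.
  intros HY Hk Hpr. replace r with ((r - p) + p)%nat at 1 by lia.
  induction (r - p)%nat as [|m IH]; [reflexivity|].
  change (Op l (S (m + p)) (tder l (tdern l m Y)) k = Op l p Y k).
  rewrite Op_tder; auto.
  replace (S (m + p)) with (m + S p)%nat by lia. apply smooth_tdern; auto.
Qed.

Section Trajectory.

Variables (l : nat) (X : JF) (k : nat).
Hypotheses (HX : smooth l 0 X) (Hk : (k < l)%nat).

Lemma pd_tdern_top m : pd (DirQ m k) (tdern l m X) = pd (DirQ 0 k) X.
Proof.
  induction m as [|m IH]; [reflexivity|].
  change (tdern l (S m) X) with (tder l (tdern l m X)).
  rewrite (pd_tder l m) by auto using smooth_tdern0.
  rewrite (pd_irrelevant l m _ (S m) k) by (auto using smooth_depends_upto, smooth_tdern0; lia).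
  now rewrite tder_cst, fplus_0l.
Qed.

Lemma pd_tdern_subtop m :
  pd (DirQ m k) (tdern l (S m) X) = fscal (INR (S m)) (tder l (pd (DirQ 0 k) X)).
Proof.
  induction m as [|m IH].
  - change (tdern l 1 X) with (tder l X). rewrite (pd_tder l 0), fplus_0r by auto.
    extensionality z; extensionality t. unfold fscal. simpl. ring.
  - change (tdern l (S (S m)) X) with (tder l (tdern l (S m) X)).
    rewrite (pd_tder l (S m)) by auto using smooth_tdern0.
    cbn [pd_lower]. rewrite IH, pd_tdern_top.
    extensionality z; extensionality t. unfold fplus, fscal. rewrite (S_INR (S m)). ring.
Qed.

End Trajectory.

Lemma JT_ext l n X w w' k z t : (forall a, (a < n)%nat -> w a z t = w' a z t) ->
  JT l n X w k z t = JT l n X w' k z t.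
Proof. intro H. unfold JT. apply fsum_ext. intros a Ha. now rewrite H. Qed.

Lemma smooth_JT l K n X w k : (forall a, (a < n)%nat -> smooth l 0 (X a)) ->
  (forall a, (a < n)%nat -> smooth l K (w a)) -> smooth l K (JT l n X w k).
Proof.
  intros HX Hw. apply (smooth_fsumF l K n (fun a => fmul (pd (DirQ 0 k) (X a)) (w a))).
  intros a Ha. apply smooth_mul; auto.
  apply smooth_mono with 0%nat; [lia|]. apply smooth_pd; auto.
Qed.

Lemma JT_add l n X u v k z t :
  JT l n X (fun a z t => u a z t + v a z t) k z t = JT l n X u k z t + JT l n X v k z t.
Proof. unfold JT. rewrite <- fsum_plus. apply fsum_ext. intros. ring. Qed.

Lemma JT_sub l n X u v k z t :
  JT l n X (fun a z t => u a z t - v a z t) k z t = JT l n X u k z t - JT l n X v k z t.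
Proof. unfold JT. rewrite <- fsum_minus. apply fsum_ext. intros. ring. Qed.

Definition half_weighted_square (n : nat) (c : nat -> R) (V : nat -> JF) : JF :=
  fscal (/ 2) (fsumF n (fun a => fmul (fscal (c a) (V a)) (V a))).

Lemma smooth_half_weighted_square l K n c V : (forall a, (a < n)%nat -> smooth l K (V a)) ->
  smooth l K (half_weighted_square n c V).
Proof.
  intro HV. apply smooth_scal, smooth_fsumF. intros a Ha.
  apply smooth_mul; [apply smooth_scal|]; auto.
Qed.

Lemma pd_half_weighted_square d n c V : (forall a, (a < n)%nat -> has_partials (V a)) ->
  pd d (half_weighted_square n c V) = fsumF n (fun a => fmul (fscal (c a) (V a)) (pd d (V a))).
Proof.
  intro HV. extensionality z; extensionality t. apply pd_unique.
  replace (fsumF n _ z t) with (/ 2 * fsum n (fun a =>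
      c a * pd d (V a) z t * V a z t + c a * V a z t * pd d (V a) z t))
    by (unfold fsumF, fmul, fscal; rewrite <- fsum_scal; apply fsum_ext; intros; field).
  apply has_pd_scal, has_pd_fsumF. intros a Ha.
  apply has_pd_mul; [apply has_pd_scal|]; apply has_pd_pd; auto.
Qed.

Lemma Op_half_weighted_square l n X c h k : (forall a, (a < n)%nat -> smooth l 0 (X a)) ->
  (k < l)%nat ->
  Op l h (half_weighted_square n c (fun a => tdern l (S h) (X a))) k =
  fscal (- INR (S h)) (JT l n X (fun a => fscal (c a) (tdern l (S (S h)) (X a))) k).
Proof.
  intros HX Hk.
  assert (HV : forall a, (a < n)%nat -> smooth l (S h) (tdern l (S h) (X a)))
    by auto using smooth_tdern0.
  assert (HdX : forall a, (a < n)%nat -> smooth l (S h) (pd (DirQ 0 k) (X a)))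
    by (intros; apply smooth_mono with 0%nat; auto using smooth_pd; lia).
  extensionality z; extensionality t. unfold Op, pdq.
  rewrite !pd_half_weighted_square by eauto using smooth_has_partials.
  rewrite (tder_fsumF l (S h)) by (intros; apply smooth_mul; [apply smooth_scal|]; auto;
    rewrite pd_tdern_top; auto).
  unfold JT, fsumF, fscal, pdq. rewrite <- !fsum_scal, <- fsum_minus. apply fsum_ext.
  intros a Ha. rewrite pd_tdern_top, pd_tdern_subtop by auto.
  fold (fscal (c a) (tdern l (S h) (X a))).
  rewrite (tder_mul l (S h)), (tder_scal l (S h)) by auto using smooth_scal.
  change (tdern l (S (S h)) (X a)) with (tder l (tdern l (S h) (X a))).
  unfold fplus, fmul, fscal. rewrite S_INR. ring.
Qed.

Lemma smooth_linear_top l rho A : (1 <= rho)%nat -> (forall k', smooth l (rho - 1) (A k')) ->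
  smooth l rho (fsumF l (fun k' => fmul (A k') (coord rho k'))).
Proof.
  intros Hrho HA. apply smooth_fsumF. intros k' Hk'.
  apply smooth_mul; [apply smooth_mono with (rho - 1)%nat; auto; lia|apply smooth_coord; lia].
Qed.

Lemma Op_linear_top l rho A k : (1 <= rho)%nat ->
  (forall k', smooth l (rho - 1) (A k')) -> (k < l)%nat ->
  Op l rho (fsumF l (fun k' => fmul (A k') (coord rho k'))) k = A k.
Proof.
  intros Hrho HA Hk. rewrite Op_of_order by auto using smooth_linear_top.
  extensionality z; extensionality t. unfold pdq. apply pd_unique.
  replace (A k z t) with
    (fsum l (fun k' => 0 * coord rho k' z t + A k' z t * kronecker (DirQ rho k) rho k')).
  - apply has_pd_fsumF. intros k' Hk'. apply has_pd_mul; [|apply has_pd_coord].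
    apply (has_pd_irrelevant l (rho - 1)); [apply smooth_depends_upto, HA|lia].
  - rewrite (fsum_ext l _ (fun k' => if Nat.eqb k' k then A k' z t else 0)), fsum_delta.
    + destruct (Nat.ltb_spec k l); [reflexivity|lia].
    + intros k' _. unfold kronecker. rewrite Nat.eqb_refl.
      destruct (Nat.eqb k' k); simpl; ring.
Qed.

Section Lagrangian.

Variables (l n : nat) (X : nat -> JF) (c : nat -> R) (U0 : JF).
Hypotheses (HX : forall a, (a < n)%nat -> smooth l 0 (X a)) (HU0 : smooth l 0 U0).

Let T := half_weighted_square n c (fun a => tdern l 1 (X a)).
Let HU1 : smooth l 1 U0 := smooth_mono l 0 1 U0 (Nat.le_0_l 1) HU0.

Lemma smooth_lagrangian : smooth l 1 (fplus T U0).
Proof. apply smooth_plus; [apply smooth_half_weighted_square|]; auto using smooth_tdern0. Qed.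

Lemma Op_lagrangian k : (k < l)%nat ->
  Op l 0 (fplus T U0) k =
  fplus (fscal (-1) (JT l n X (fun a => fscal (c a) (tdern l 2 (X a))) k)) (pdq 0 k U0).
Proof.
  intro Hk.
  unfold T. rewrite (Op_plus l 1), Op_half_weighted_square, Op_of_order, INR_1;
    auto using smooth_tdern0, smooth_half_weighted_square.
Qed.

End Lagrangian.

#[local] Hint Resolve smooth_plus smooth_scal smooth_tdern_sub : smooth.

Theorem proposition1p5
  (l N : nat) (m : nat -> R) (X : nat -> JF)
  (U0 : JF) (F0 : nat -> JF)
  (s : nat) (US : JF) (FS : nat -> JF)
  (h : nat) (lam : nat -> R)
  (sigma : nat) (Rf : JF) (FR : nat -> JF)
  (rho : nat) (G : nat -> JF)
  (Hm : forall p, (p < N)%nat -> 0 < m p)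
  (HX : forall a, (a < 3 * N)%nat -> smooth l 0 (X a))
  (* (i) *)
  (HU0 : smooth l 0 U0)
  (H0 : forall k, (k < l)%nat -> forall z t, JT l (3 * N) X F0 k z t = pdq 0 k U0 z t)
  (* (ii) *)
  (HUS : smooth l (S s) US)
  (HS : forall k, (k < l)%nat -> forall z t, JT l (3 * N) X FS k z t = Op l s US k z t)
  (* (iii) *)
  (Hh : (1 <= h)%nat)
  (Hlam : forall a, (a < 3 * N)%nat -> 0 < lam a)
  (* (iv) *)
  (Hsigma : (1 <= sigma)%nat)
  (HRf : smooth l sigma Rf)
  (HR : forall k, (k < l)%nat -> forall z t, JT l (3 * N) X FR k z t = - pdq sigma k Rf z t)
  (* (v) *)
  (Hrho : (1 <= rho)%nat)
  (HG : forall a, (a < 3 * N)%nat -> smooth l (rho - 1) (G a)) :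
  let n := (3 * N)%nat in
  let Xdot := fun a => tder l (X a) in
  (* Q = (m_1 P_1', ..., m_N P_N'); coordinate a belongs to point a/3 *)
  let Q := fun a : nat => fun z t => m (a / 3)%nat * Xdot a z t in
  let Qdot := fun a => tder l (Q a) in
  let FA := fun a : nat => fun z t => lam a * tdern l (S h) (X a) z t in
  let UA := fun z t =>
    / 2 * fsum n (fun a => lam a * tdern l h (X a) z t * tdern l h (X a) z t) in
  let gamma := fun z t => fsum l (fun k => JT l n X G k z t * z rho k) in
  let F := fun a : nat => fun z t => F0 a z t + FS a z t + FA a z t + FR a z t + G a z t in
  let r := Nat.max (Nat.max s (h - 1)) (Nat.max sigma rho) in
  let Lag := fun z t => / 2 * fsum n (fun a => Q a z t * Xdot a z t) + U0 z t in
  let Y := fun z t =>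
    tdern l r Lag z t + tdern l (r - s) US z t
    - / INR h * tdern l (r - (h - 1)) UA z t
    - tdern l (r - sigma) Rf z t + tdern l (r - rho) gamma z t in
  (forall k, (k < l)%nat -> forall z t,
      Op l r Y k z t = JT l n X (fun a z t => F a z t - Qdot a z t) k z t) /\
  (forall z t,
      (forall k, (k < l)%nat -> Op l r Y k z t = 0) <->
      (forall k, (k < l)%nat -> JT l n X Qdot k z t = JT l n X F k z t)).
Proof.
  intros n Xdot Q Qdot FA UA gamma F r Lag Y.
  (* From here on the paper's [h] is [S h]. *)
  destruct h as [|h]; [lia|].
  assert (0 <= r /\ s <= r /\ h <= r /\ sigma <= r /\ rho <= r)%nat as (? & ? & ? & ? & ?) by lia.
  assert (ELag : Lag = fplus (half_weighted_square n (fun a => m (a / 3)%nat)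
                                (fun a => tdern l 1 (X a))) U0) by reflexivity.
  assert (EUA : UA = half_weighted_square n lam (fun a => tdern l (S h) (X a))) by reflexivity.
  assert (Egam : gamma = fsumF l (fun k => fmul (JT l n X G k) (coord rho k))) by reflexivity.
  assert (EQdot : forall a, (a < n)%nat -> Qdot a = fscal (m (a / 3)%nat) (tdern l 2 (X a)))
    by (intros; apply (tder_scal l 1), smooth_tder; auto).
  assert (SLag : smooth l 1 Lag) by (rewrite ELag; apply smooth_lagrangian; auto).
  assert (SUA : smooth l (S h) UA) by (rewrite EUA; apply smooth_half_weighted_square; auto using smooth_tdern0).
  assert (SRf : smooth l (S sigma) Rf) by (apply smooth_mono with sigma; auto).
  assert (Sgam : smooth l (S rho) gamma)
    by (rewrite Egam; apply smooth_mono with rho; auto using smooth_linear_top, smooth_JT).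
  assert (EY : Y = fplus (fplus (fplus (fplus (tdern l (r - 0) Lag) (tdern l (r - s) US))
      (fscal (- / INR (S h)) (tdern l (r - h) UA))) (fscal (-1) (tdern l (r - sigma) Rf)))
      (tdern l (r - rho) gamma)).
  { extensionality z; extensionality t. unfold Y, fplus, fscal.
    rewrite Nat.sub_0_r. replace (S h - 1)%nat with h by lia. ring. }
  assert (Main : forall k, (k < l)%nat -> forall z t,
      Op l r Y k z t = JT l n X (fun a z t => F a z t - Qdot a z t) k z t).
  { intros k Hk z t.
    rewrite EY, !(Op_plus l (S r)), !(Op_scal l (S r)) by auto 6 with smooth.
    rewrite !Op_tdern_sub by auto.
    rewrite ELag, EUA, Egam, Op_lagrangian, Op_half_weighted_square, (Op_of_order l sigma Rf),
      (Op_linear_top l rho) by auto using smooth_JT.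
    unfold fplus, fscal. rewrite <- HS, <- H0 by exact Hk.
    replace (pdq sigma k Rf z t) with (- JT l n X FR k z t) by (rewrite HR; auto; ring).
    unfold F. rewrite JT_sub, !JT_add.
    rewrite (JT_ext l n X Qdot (fun a => fscal (m (a / 3)%nat) (tdern l 2 (X a))))
      by (intros; now rewrite EQdot).
    unfold FA, fscal. fold n. field. apply not_0_INR. lia. }
  split; [exact Main|].
  intros z t. split; intros Hall k Hk; specialize (Hall k Hk).
  - rewrite Main, JT_sub in Hall by exact Hk. lra.
  - rewrite Main, JT_sub by exact Hk. lra.
Qed.
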